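(* Let $G=(V,E,\{w_j\})$ be a reduced instance of the line highway problem with $[s,\ell]$-valuation (with $s\ge1$), and let $r=s/\ell$. Let $\mathbf p$ be the price vector output by the algorithm $\mathrm{Line}_{[s,\ell]}$ described in the context. Then \[ \frac{\mathrm{Opt}_{\rm coup}(G)}{\mathbf{E}[\mathrm{Profit}_{\rm coup}(\mathbf p)]}\le \begin{cases} 4(1-\ln r) & 0\le r\le\alpha \text{ or } 1/\sqrt e\le r\le 1,\\ 3/r & \alpha<r\le 1/2,\\ 6 & 1/2<r<1/\sqrt e,\end{cases} \] where $\alpha\approx 0.3824$ is the solution of $3/x=4(1-\ln x)$.
   Context: For integers $a\le b$, $[a,b]=\{a,\dots,b\}$. A reduced instance of the line highway problem is $G=(V,E,\{w_j\})$ with $V=[1,n]$ and a finite multiset of customers $e_j=[j_s,j_t]$ ($1\le j_s\le j_t\le n$) with integer valuations $w_j>0$; it has $[s,\ell]$-valuation if $s=\min_j w_j$, $\ell=\max_j w_j$. For $\mathbf p\in\mathbb R^n$, $p(e_j)=\sum_{i\in e_j}p_i$, $\mathrm{Profit}_{\rm coup}(\mathbf p)=\sum_{j:\,w_j\ge p(e_j)}\max\{p(e_j),0\}$, $\mathrm{Opt}_{\rm coup}(G)=\max_{\mathbf p}\mathrm{Profit}_{\rm coup}(\mathbf p)$. DAG representation: vertices $u_0,\dots,u_n$, arc $u_{j_s-1}\to u_{j_t}$ for each $e_j$; partial sums $(s_0,\dots,s_n)$ give prices $p_i=s_i-s_{i-1}$. Algorithm Line_Random: choose each $s_i$ independently uniformly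 from $\{0,\dots,\ell\}$ and output the resulting prices $\boldsymbol\sigma$. Algorithm Line_Cut: mark each DAG vertex independently with probability $1/2$, let $L$ be marked and $R$ unmarked vertices; for each integer $x\in[s,\ell]$ set partial sum $0$ on $L$ and $x$ on $R$ giving $\boldsymbol\tau_x$; output $\boldsymbol\tau$ maximizing $\mathrm{Profit}_{\rm coup}$ among the $\boldsymbol\tau_x$. Algorithm $\mathrm{Line}_{[s,\ell]}$: run Line_Random to get $\boldsymbol\sigma$, run Line_Cut to get $\boldsymbol\tau$, and output $\mathbf p\in\{\boldsymbol\sigma,\boldsymbol\tau\}$ with $\mathrm{Profit}_{\rm coup}(\mathbf p)=\max\{\mathrm{Profit}_{\rm coup}(\boldsymbol\sigma),\mathrm{Profit}_{\rm coup}(\boldsymbol\tau)\}$. Expectations are over the algorithm's randomness. *)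

From mathcomp Require Import all_boot all_order all_algebra.
From mathcomp Require Import boolp classical_sets reals.
From mathcomp.analysis Require Import sequences exp.
From Stdlib Require List.
Set Implicit Arguments. Unset Strict Implicit. Unset Printing Implicit Defensive.
Import Order.TTheory GRing.Theory Num.Theory.
Local Open Scope ring_scope.

(* A customer e_j = [js, jt] with integer valuation w_j. *)
Record customer := Customer { cs : nat; ct : nat; cw : nat }.

(* Reduced instance on V = [1,n]: every customer satisfies 1 <= js <= jt <= n
   and w_j > 0.  The multiset of customers is a finite list. *)
Definition reduced_instance (n : nat) (cust : seq customer) : Prop :=
  forall c, List.In c cust -> [/\ (1 <= cs c)%N, (cs c <= ct c)%N, (ct c <= n)%N & (0 < cw c)%N].

Definition has_valuation (cust : seq customer) (s l : nat) : Prop :=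
  (forall c, List.In c cust -> (s <= cw c <= l)%N) /\
  (exists c, List.In c cust /\ cw c = s) /\
  (exists c, List.In c cust /\ cw c = l).

Section Line.
Variable R : realType.
Variable n : nat.
Variable cust : seq customer.

(* Prices: p : 'I_n -> R, where index k : 'I_n stands for item k+1 of [1,n]. *)
Definition price_of (p : 'I_n -> R) (c : customer) : R :=
  \sum_(k < n | (cs c <= k.+1 <= ct c)%N) p k.

Definition profit_coup (p : 'I_n -> R) : R :=
  \sum_(c <- cust | price_of p c <= (cw c)%:R) Num.max (price_of p c) 0.

Definition opt_coup : R := sup (range profit_coup).

(* Prices from partial sums (s_0,...,s_n) (vertex u_i is index i : 'I_n.+1):
   p_{k+1} = s_{k+1} - s_k. *)
Definition prices_of_partial (S : 'I_n.+1 -> R) : 'I_n -> R :=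
  fun k => S (inord k.+1) - S (inord k).

Definition line_random (l : nat) (sv : {ffun 'I_n.+1 -> 'I_l.+1}) : 'I_n -> R :=
  prices_of_partial (fun i => ((sv i : nat)%:R)).

(* tau_x for a marking m (true = marked = in L): partial sum 0 on L, x on R. *)
Definition tau_x (m : {ffun 'I_n.+1 -> bool}) (x : nat) : 'I_n -> R :=
  prices_of_partial (fun i => if m i then 0 else x%:R).

Definition line_cut_profit (s l : nat) (m : {ffun 'I_n.+1 -> bool}) : R :=
  \big[Num.max/0]_(s <= x < l.+1) profit_coup (tau_x m x).

(* Expected profit of the output of Line_[s,l]: the two subroutines use
   independent randomness; the output is the better of sigma and tau. *)
Definition expected_profit_line (s l : nat) : R :=
  ((((l.+1) ^ n.+1 * 2 ^ n.+1)%N)%:R)^-1 *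
  \sum_(sv : {ffun 'I_n.+1 -> 'I_l.+1})
   \sum_(m : {ffun 'I_n.+1 -> bool})
     Num.max (profit_coup (line_random sv)) (line_cut_profit s l m).

End Line.

Definition line_bound (R : realType) (alpha r : R) : R :=
  if r <= alpha then 4 * (1 - ln r)
  else if r <= 1 / 2 then 3 / r
  else if r < 1 / Num.sqrt (expR 1) then 6
  else 4 * (1 - ln r).

From mathcomp Require Import all_boot all_order all_algebra.
From mathcomp Require Import boolp classical_sets reals.
From mathcomp.analysis Require Import sequences exp.
From mathcomp Require Import zify ring lra.
Import Order.TTheory GRing.Theory Num.Theory.

(* Every customer pays at most its valuation, so Opt <= W, the sum of all
   valuations, and it suffices to bound W by the expected profit E.  Both
   subroutines only look at the two partial sums at the endpoints of a
   customer, which are independent and uniform.  Under Line_Random a customer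
   of valuation w <= l earns on average D/(l+1)^2, where D = random_gain w l
   and 6D = w(w+1)(3l+2-2w); the factor (w+1)(3l+2-2w) is concave in w, so
   comparing it at w = s and w = l gives W <= (3/r) E when r <= 1/2 and
   W <= 6 E when r >= 1/2.  Under tau_x every customer with w >= x pays x
   when its left endpoint is marked and its right one is not, so
   x #{j | w_j >= x} <= 4 E for every x in [s, l]; writing
   w_j = s + #{k in [s, l) | k < w_j} and summing these layers gives
   W <= 4 E (1 + H_l - H_s) <= 4 (1 - ln r) E. *)

(* [gain w x y] is the payment of a customer of valuation w whose endpoint
   partial sums are x and y (see pay_natE). *)
Definition gain (w x y : nat) : nat := if x <= y <= x + w then y - x else 0.

Definition random_gain (w l : nat) : nat :=
  \sum_(x < l.+1) \sum_(y < l.+1) gain w x y.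

Lemma sum_gain_column w m :
  2 * \sum_(x < m) gain w x m = minn w m * (minn w m).+1.
Proof.
elim: m => [|m IHm]; first by rewrite big_ord0 muln0 minn0.
rewrite big_ord_recl /= {1}/gain leq0n /= add0n subn0.
have -> : \sum_(i < m) gain w (bump 0 i) m.+1 = \sum_(i < m) gain w i m.
  by apply: eq_bigr => i _; rewrite /gain /bump /= add1n ltnS addSn ltnS subSS.
case: (leqP m.+1 w) => h; move: IHm.
  by rewrite (minn_idPr (ltnW h)); nia.
by rewrite add0n (minn_idPl (h : w <= m)); nia.
Qed.

Lemma random_gainE w l :
  6 * random_gain w l = minn w l * (minn w l).+1 * (3 * l + 2 - 2 * minn w l).
Proof.
elim: l => [|l IHl].
  by rewrite /random_gain !big_ord1 /gain; case: (_ <= _); rewrite ?subnn muln0 minn0.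
have -> : random_gain w l.+1 = random_gain w l + \sum_(x < l.+1) gain w x l.+1.
  rewrite /random_gain big_ord_recr /= [X in _ + X]big1 => [|y _]; last first.
    by rewrite /gain; case: ifP => // _; apply/eqP; rewrite subn_eq0 -ltnS.
  rewrite addn0 -big_split /=; apply: eq_bigr => x _.
  by rewrite big_ord_recr.
have := sum_gain_column w l.+1; move: IHl.
case: (leqP w l) => h.
  by rewrite (minn_idPl (leqW h)); nia.
by rewrite (minn_idPr h); nia.
Qed.

Lemma random_gain_lb_small_ratio s w l : 2 * s <= l -> s <= w <= l ->
  2 * s * (w * l.+1 ^ 2) <= l * (6 * random_gain w l).
Proof.
move=> hsl /andP[hsw hwl]; rewrite random_gainE (minn_idPl hwl).
have profile : 2 * (s.+1 * l.+1) <= w.+1 * (3 * l + 2 - 2 * w).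
  have [t ew] : exists t, w = s + t by exists (w - s); lia.
  have [u el] : exists u, l = s + t + u by exists (l - w); lia.
  rewrite {}ew {}el {hsw hwl} in hsl *.
  have -> : 3 * (s + t + u) + 2 - 2 * (s + t) = s + t + 3 * u + 2 by lia.
  have le1 : s.+1 * s <= s.+1 * (t + u) by apply: leq_mul => //; lia.
  have le2 : t * s <= t * (t + u) by apply: leq_mul => //; lia.
  nia.
have := leq_mul (leqnn (l * w)) profile; nia.
Qed.

Lemma random_gain_lb_large_ratio s w l : l <= 2 * s -> s <= w <= l ->
  w * l.+1 ^ 2 <= 6 * random_gain w l.
Proof.
move=> hsl /andP[hsw hwl]; rewrite random_gainE (minn_idPl hwl).
have profile : l.+1 * l.+1 <= w.+1 * (3 * l + 2 - 2 * w).
  have [t ew] : exists t, w = s + t by exists (w - s); lia.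
  have [u el] : exists u, l = s + t + u by exists (l - w); lia.
  rewrite {}ew {}el {hsw hwl} in hsl *.
  have -> : 3 * (s + t + u) + 2 - 2 * (s + t) = s + t + 3 * u + 2 by lia.
  have le_us : u * u <= u * s by apply: leq_mul => //; lia.
  nia.
have := leq_mul (leqnn w) profile; nia.
Qed.

Lemma layer_sum s w l : s <= w <= l -> w = s + \sum_(s <= k < l) (k < w).
Proof.
move=> /andP[hsw hwl]; rewrite (@big_cat_nat _ _ _ w) //=.
have -> : \sum_(w <= k < l) (k < w) = 0.
  by rewrite big_nat_cond big1 // => k /andP[/andP[wk _] _]; rewrite ltnNge wk.
rewrite addn0 (eq_big_nat _ _ (F2 := fun=> 1)); last by move=> k /andP[_ ->].
by rewrite sum_nat_const_nat muln1 subnKC.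
Qed.

Local Open Scope ring_scope.

Section SumFfunPair.
Variables (R : comNzRingType) (I T : finType) (a b : I).
Hypothesis neq_ab : a != b.

Lemma prod_split2 (F : I -> R) :
  \prod_i F i = F a * F b * \prod_(i | (i != a) && (i != b)) F i.
Proof.
rewrite (bigD1 a) //= (bigD1 b) /=; last by rewrite eq_sym.
by rewrite mulrA; congr (_ * _); apply: eq_bigl => i; rewrite andbC.
Qed.

Lemma sum_ffun_pair (h : T -> T -> R) :
  #|T|%:R ^+ 2 * \sum_(f : {ffun I -> T}) h (f a) (f b) =
  #|T|%:R ^+ #|I| * \sum_x \sum_y h x y.
Proof.
have neq_ba : (b == a) = false by rewrite eq_sym (negbTE neq_ab).
have sum_ind (F : T -> R) t0 : \sum_t F t * (t == t0)%:R = F t0.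
  by rewrite (bigD1 t0) //= eqxx mulr1 big1 ?addr0 // => t /negbTE ->; rewrite mulr0.
(* Write h (f a) (f b) with a product of indicators over I, then swap the
   sum over f with that product (bigA_distr_bigA). *)
pose G (x y : T) (i : I) (t : T) : R :=
  if i == a then (x == t)%:R else if i == b then (y == t)%:R else 1.
have prodG (f : {ffun I -> T}) x y :
    \prod_i G x y i (f i) = (x == f a)%:R * (y == f b)%:R.
  rewrite prod_split2 /G eqxx neq_ba eqxx big1 ?mulr1 //.
  by move=> i /andP[/negbTE -> /negbTE ->].
have sumG x y : #|T|%:R ^+ 2 * \sum_(f : {ffun I -> T}) \prod_i G x y i (f i) =
    #|T|%:R ^+ #|I|.
  rewrite -bigA_distr_bigA !prod_split2 /G eqxx neq_ba eqxx.
  have sum_ind1 (t0 : T) : \sum_t ((t0 == t)%:R : R) = 1.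
    rewrite -[RHS](sum_ind (fun=> 1) t0).
    by apply: eq_bigr => t _; rewrite mul1r eq_sym.
  have -> : #|T|%:R ^+ #|I| = \prod_(i : I) (#|T|%:R : R) by rewrite prodr_const.
  rewrite !sum_ind1 !mul1r prod_split2 -expr2.
  congr (_ * _); apply: eq_bigr => i /andP[/negbTE -> /negbTE ->].
  by rewrite sumr_const.
have h_expand (f : {ffun I -> T}) :
    h (f a) (f b) = \sum_x \sum_y h x y * \prod_i G x y i (f i).
  rewrite -(sum_ind (fun x => h x (f b)) (f a)); apply: eq_bigr => x _.
  rewrite -(sum_ind (fun y => h x y) (f b)) mulr_suml; apply: eq_bigr => y _.
  by rewrite prodG mulrAC -mulrA.
under eq_bigr do rewrite h_expand.
rewrite exchange_big /=.
under eq_bigr do rewrite exchange_big /=.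
rewrite !mulr_sumr; apply: eq_bigr => x _; rewrite !mulr_sumr; apply: eq_bigr => y _.
by rewrite -mulr_sumr mulrCA sumG mulrC.
Qed.
End SumFfunPair.
Arguments sum_ffun_pair {R I T a b}.

Lemma ln_sub_ge (R : realType) (x y : R) :
  0 < x -> 0 < y -> 1 - x / y <= ln y - ln x.
Proof.
move=> x0 y0; have := @le_ln1Dx R (x / y - 1).
rewrite addrCA subrr addr0 ln_div ?posrE // ltrBrDl subrr divr_gt0 // => /(_ isT).
lra.
Qed.

Lemma sum_inv_le_ln (R : realType) {s l : nat} : (0 < s)%N -> (s <= l)%N ->
  \sum_(s <= k < l) (k.+1%:R : R)^-1 <= ln l%:R - ln s%:R.
Proof.
move=> s0 sl; rewrite -(telescope_sumr (fun k => ln (k%:R : R))) //.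
apply: ler_sum_nat => k /andP[sk _].
have := @ln_sub_ge R k%:R k.+1%:R; rewrite !ltr0n.
have -> : 1 - (k%:R : R) / k.+1%:R = k.+1%:R^-1.
  by rewrite -natr1; field; rewrite natr1 pnatr_eq0.
apply; lia.
Qed.

Section SumsOverLists.
Variables (T : Type) (R : numDomainType) (r : seq T).

Lemma eq_big_In (F G : T -> R) :
  (forall c, List.In c r -> F c = G c) -> \sum_(c <- r) F c = \sum_(c <- r) G c.
Proof.
elim: r => [|c r' IHr] eqFG; first by rewrite !big_nil.
rewrite !big_cons eqFG /=; last by left.
by rewrite IHr // => d hd; apply: eqFG; right.
Qed.

Lemma ler_sum_In (F G : T -> R) :
  (forall c, List.In c r -> F c <= G c) -> \sum_(c <- r) F c <= \sum_(c <- r) G c.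
Proof.
elim: r => [|c r' IHr] leFG; first by rewrite !big_nil.
rewrite !big_cons lerD //; first by apply: leFG; left.
by apply: IHr => d hd; apply: leFG; right.
Qed.

End SumsOverLists.
Arguments eq_big_In {T R r F G}.
Arguments ler_sum_In {T R r F G}.

Section SumOfMax.
Variables (R : realDomainType) (A B : finType) (f : A -> R) (g : B -> R).

Lemma sum_max_ge_l : #|B|%:R * \sum_a f a <= \sum_a \sum_b Num.max (f a) (g b).
Proof.
rewrite mulr_sumr; apply: ler_sum => a _.
have -> : #|B|%:R * f a = \sum_(b : B) f a by rewrite sumr_const mulr_natl.
by apply: ler_sum => b _; rewrite le_max lexx.
Qed.

Lemma sum_max_ge_r : #|A|%:R * \sum_b g b <= \sum_a \sum_b Num.max (f a) (g b).
Proof.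
rewrite mulr_sumr exchange_big; apply: ler_sum => b _.
have -> : #|A|%:R * g b = \sum_(a : A) g b by rewrite sumr_const mulr_natl.
by apply: ler_sum => a _; rewrite le_max lexx orbT.
Qed.

End SumOfMax.
Arguments sum_max_ge_l {R A B}.
Arguments sum_max_ge_r {R A B}.

Section Payment.
Variable R : realDomainType.

Definition pay (w price : R) : R := if price <= w then Num.max price 0 else 0.

Lemma pay_ge0 w price : 0 <= pay w price.
Proof. by rewrite /pay; case: ifP => _; rewrite ?le_max ?lexx ?orbT. Qed.

Lemma pay_le w price : 0 <= w -> pay w price <= w.
Proof. by move=> w0; rewrite /pay; case: ifP => // le_pw; rewrite ge_max le_pw. Qed.

Lemma pay_natE (w x y : nat) : pay w%:R (y%:R - x%:R) = (gain w x y)%:R.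
Proof.
rewrite /pay /gain; have [le_xy|lt_yx] := leqP x y; last first.
  have lt_yx' : y%:R - x%:R < 0 :> R by rewrite subr_lt0 ltr_nat.
  by rewrite (le_trans (ltW lt_yx')) ?ler0n // max_r // ltW.
by rewrite -natrB // ler_nat max_l ?ler0n // leq_subLR; case: leqP.
Qed.

End Payment.
Arguments pay {R}.
Arguments pay_ge0 {R}.

Section LineInstance.
Variables (R : realType) (n : nat) (cust : seq customer).
Hypothesis cust_reduced : reduced_instance n cust.

Lemma profit_coupE (p : 'I_n -> R) :
  profit_coup cust p = \sum_(c <- cust) pay (cw c)%:R (price_of p c).
Proof. by rewrite /profit_coup big_mkcond. Qed.

Lemma opt_coup_le_total : opt_coup R n cust <= \sum_(c <- cust) (cw c)%:R.
Proof.
apply: ge_sup; first by exists (profit_coup cust (fun _ : 'I_n => 0)), (fun=> 0).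
move=> _ [p _ <-]; rewrite profit_coupE.
by apply: ler_sum => c _; apply/pay_le/ler0n.
Qed.

Lemma price_of_partial (S : 'I_n.+1 -> R) c : List.In c cust ->
  price_of (prices_of_partial S) c = S (inord (ct c)) - S (inord (cs c).-1).
Proof.
move=> /cust_reduced[s_gt0 s_le_t t_le_n _].
rewrite -(telescope_sumr (fun j => S (inord j))); last first.
  exact: leq_trans (leq_pred _) s_le_t.
rewrite (big_nat_widen _ _ _ _ _ t_le_n) big_geq_mkord; apply: eq_bigl => k.
by rewrite -{1}(prednK s_gt0) ltnS andbC.
Qed.

Lemma endpoints_neq c : List.In c cust ->
  (inord (cs c).-1 : 'I_n.+1) != inord (ct c).
Proof.
move=> /cust_reduced[s_gt0 s_le_t t_le_n _]; apply/eqP => /(congr1 val) /=.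
by rewrite !inordK; lia.
Qed.

Lemma sum_profit_random l :
  l.+1%:R ^+ 2 *
    \sum_(sv : {ffun 'I_n.+1 -> 'I_l.+1}) profit_coup cust (line_random R sv) =
  l.+1%:R ^+ n.+1 * \sum_(c <- cust) (random_gain (cw c) l)%:R.
Proof.
under eq_bigr do rewrite profit_coupE.
rewrite exchange_big /= !mulr_sumr; apply: eq_big_In => c c_in.
under eq_bigr do rewrite /line_random price_of_partial // pay_natE.
have := sum_ffun_pair (endpoints_neq _ c_in)
  (fun x y : 'I_l.+1 => (gain (cw c) x y)%:R : R).
rewrite !card_ord => ->; congr (_ * _).
by rewrite /random_gain natr_sum; apply: eq_bigr => x _; rewrite natr_sum.
Qed.

Lemma sum_profit_cut x :
  2 ^+ n.+1 * \sum_(c <- cust) (x <= cw c)%:R * x%:R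
  <= 4 * \sum_(m : {ffun 'I_n.+1 -> bool}) profit_coup cust (tau_x R m x).
Proof.
under [X in _ <= _ * X]eq_bigr do rewrite profit_coupE.
rewrite exchange_big /= !mulr_sumr; apply: ler_sum_In => c c_in.
under [X in _ <= _ * X]eq_bigr do rewrite /tau_x price_of_partial //.
have := sum_ffun_pair (endpoints_neq _ c_in)
  (fun u v : bool => pay (cw c)%:R ((if v then 0 else x%:R) - (if u then 0 else x%:R))).
rewrite card_bool card_ord -(_ : 2 ^+ 2 = 4) => [->|]; last by rewrite expr2 -natrM.
rewrite ler_wpM2l ?exprn_ge0 // !big_bool /= !subr0.
have -> : pay (cw c)%:R x%:R = (x <= cw c)%:R * x%:R :> R.
  by rewrite /pay ler_nat; case: leqP => _; rewrite ?mul1r ?mul0r // max_l.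
have := pay_ge0 (cw c)%:R (0 : R); have := pay_ge0 (cw c)%:R (0 - x%:R : R).
have := pay_ge0 (cw c)%:R (x%:R - x%:R : R); lra.
Qed.

Variables s l : nat.
Let E := expected_profit_line R n cust s l.
Let sigma_profit (sv : {ffun 'I_n.+1 -> 'I_l.+1}) :=
  profit_coup cust (line_random R sv).
Let cut_profit (m : {ffun 'I_n.+1 -> bool}) := line_cut_profit R cust s l m.

Lemma sum_max_lineE :
  \sum_(sv : {ffun 'I_n.+1 -> 'I_l.+1}) \sum_(m : {ffun 'I_n.+1 -> bool})
     Num.max (sigma_profit sv) (cut_profit m)
  = l.+1%:R ^+ n.+1 * 2 ^+ n.+1 * E.
Proof.
rewrite /E /expected_profit_line mulrA -natrX -natrX -natrM divff ?mul1r //.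
by rewrite pnatr_eq0 muln_eq0 !expn_eq0.
Qed.

Lemma random_gain_le_expected :
  \sum_(c <- cust) (random_gain (cw c) l)%:R <= l.+1%:R ^+ 2 * E.
Proof.
have := sum_max_ge_l sigma_profit cut_profit.
rewrite sum_max_lineE card_ffun card_bool card_ord natrX [_ * 2 ^+ _]mulrC -mulrA.
rewrite ler_pM2l ?exprn_gt0 ?ltr0n // => sum_random_le.
rewrite -(ler_pM2l (_ : 0 < l.+1%:R ^+ n.+1)) ?exprn_gt0 ?ltr0n //.
rewrite -sum_profit_random mulrCA ler_pM2l ?exprn_gt0 ?ltr0n //.
Qed.

Lemma layer_le_expected x : (s <= x <= l)%N ->
  \sum_(c <- cust) (x <= cw c)%:R * x%:R <= 4 * E.
Proof.
move=> x_range.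
have := sum_max_ge_r sigma_profit cut_profit.
rewrite sum_max_lineE card_ffun !card_ord natrX -mulrA.
rewrite ler_pM2l ?exprn_gt0 ?ltr0n // => sum_cut_le.
rewrite -(ler_pM2l (_ : 0 < 2 ^+ n.+1)) ?exprn_gt0 ?ltr0n //.
apply: (le_trans (sum_profit_cut x)); rewrite mulrCA ler_pM2l ?ltr0n //.
apply: le_trans sum_cut_le; apply: ler_sum => m _.
by apply: (le_bigmax_seq _ x) => //; rewrite mem_index_iota ltnS.
Qed.

Hypothesis valuation_range : forall c, List.In c cust -> (s <= cw c <= l)%N.
Hypothesis s_gt0 : (0 < s)%N.
Hypothesis s_le_l : (s <= l)%N.

Let W := \sum_(c <- cust) ((cw c)%:R : R).

Lemma first_layer_le_expected : \sum_(c <- cust) (s%:R : R) <= 4 * E.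
Proof.
have := layer_le_expected s; rewrite leqnn s_le_l => /(_ isT); apply: le_trans.
by apply: ler_sum_In => c /valuation_range /andP[-> _]; rewrite mul1r.
Qed.

Lemma expected_profit_ge0 : 0 <= E.
Proof.
have := first_layer_le_expected; have : 0 <= \sum_(c <- cust) (s%:R : R).
  by apply: sumr_ge0 => c _; rewrite ler0n.
lra.
Qed.

Lemma total_le_cut : W <= 4 * (1 - ln (s%:R / l%:R)) * E.
Proof.
have layers c : List.In c cust ->
    (cw c)%:R = s%:R + \sum_(s <= k < l) (k.+1 <= cw c)%:R :> R.
  by move=> /valuation_range /layer_sum {1}->; rewrite natrD natr_sum.
have next_layer k : (s <= k < l)%N ->
    \sum_(c <- cust) ((k.+1 <= cw c)%:R : R) <= 4 * E * k.+1%:R^-1.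
  move=> /andP[sk kl]; rewrite ler_pdivlMr ?ltr0n // mulr_suml.
  by apply: layer_le_expected; rewrite kl (leq_trans sk).
rewrite /W (eq_big_In layers) big_split /= exchange_big /=.
have := ler_sum_nat next_layer; rewrite -mulr_sumr => upper_layers.
have := ler_wpM2l (mulr_ge0 (ler0n _ 4) expected_profit_ge0)
  (sum_inv_le_ln R s_gt0 s_le_l).
rewrite ln_div ?posrE ?ltr0n ?(leq_trans s_gt0) //.
move: first_layer_le_expected upper_layers.
set H := \sum_(_ <= _ < _) _^-1; set U := \sum_(_ <= _ < _) _.
set S := \sum_(_ <- _) _; set a := ln _; set b := ln _; nra.
Qed.

Lemma total_le_random (beta : R) : 0 <= beta ->
    (forall w, (s <= w <= l)%N -> (w * l.+1 ^ 2)%:R <= beta * (random_gain w l)%:R) ->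
  W <= beta * E.
Proof.
move=> beta_ge0 gain_ge.
rewrite -(ler_pM2r (_ : 0 < l.+1%:R ^+ 2)) ?exprn_gt0 ?ltr0n //.
rewrite -mulrA [E * _]mulrC.
apply: le_trans (ler_wpM2l beta_ge0 random_gain_le_expected).
rewrite /W mulr_suml mulr_sumr; apply: ler_sum_In => c /valuation_range w_range.
by rewrite -natrX -natrM; apply: gain_ge.
Qed.

Lemma total_le_random_small : (2 * s <= l)%N -> W <= 3 / (s%:R / l%:R) * E.
Proof.
move=> small_r; apply: total_le_random => [|w w_range].
  by rewrite divr_ge0 ?divr_ge0 ?ler0n.
have := random_gain_lb_small_ratio _ _ _ small_r w_range; rewrite -(ler_nat R) !natrM.
have s_pos : (0 : R) < s%:R by rewrite ltr0n.
have l_pos : (0 : R) < l%:R by rewrite ltr0n (leq_trans s_gt0).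
rewrite (_ : 3 / _ * _ = l%:R * (6 * (random_gain w l)%:R) / (2 * s%:R)).
  by move=> h; rewrite ler_pdivlMr ?mulr_gt0 // mulrC.
by field; rewrite !lt0r_neq0.
Qed.

Lemma total_le_random_large : (l <= 2 * s)%N -> W <= 6 * E.
Proof.
move=> large_r; apply: total_le_random => // w w_range.
by rewrite -natrM ler_nat; exact: random_gain_lb_large_ratio large_r w_range.
Qed.

End LineInstance.

Lemma ratio_le_half (R : realFieldType) (s l : nat) : (0 < l)%N ->
  (s%:R / l%:R <= 1 / 2 :> R) = (2 * s <= l)%N.
Proof.
move=> l_gt0; rewrite ler_pdivrMr ?ltr0n // mulrAC mul1r ler_pdivlMr ?ltr0n //.
by rewrite mulrC -natrM ler_nat.
Qed.

Theorem theorem3 (R : realType) (n : nat) (cust : seq customer) (s l : nat)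
  (alpha : R) :
  reduced_instance n cust ->
  has_valuation cust s l ->
  (1 <= s)%N ->
  0 < alpha < 1 -> 3 / alpha = 4 * (1 - ln alpha) ->
  opt_coup R n cust <=
    line_bound alpha ((s%:R : R) / (l%:R)) * expected_profit_line R n cust s l.
Proof.
move=> reduced [val_range [[c0 [c0_in c0_w]] _]] s_gt0 _ _.
have s_le_l : (s <= l)%N by have /andP[] := val_range c0 c0_in; rewrite c0_w.
have l_gt0 : (0 < l)%N := leq_trans s_gt0 s_le_l.
apply: le_trans (opt_coup_le_total R n cust) _.
rewrite /line_bound; case: ifP => _; first exact: total_le_cut.
case: ifP => [small_r|large_r].
  by apply: total_le_random_small; rewrite // -(ratio_le_half R).
case: ifP => _; last exact: total_le_cut.
by apply: total_le_random_large; rewrite // ltnW // ltnNge -(ratio_le_half R) ?large_r.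
Qed.
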